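(* Let $P$ be a finite set of points in the plane, and call $X\subseteq P$ a clique if the unit disks $D(p,1)$, $p\in X$, pairwise intersect (equivalently, all pairwise distances in $X$ are at most $2$). Let $\mathcal{G}$ be a regular axis-parallel square grid whose cells have diameter $2$, let $C$ be a grid cell containing at least one point of $P$, let $C^+$ be the $5\times 5$ block of grid cells whose central cell is $C$, and let $P_C$ be the set of points of $P$ lying in some cell of $C^+$. Let $\varepsilon>0$. Choose $p_1,p_2\in P_C$ independently and uniformly at random. Let $s$ be the line segment of length $2$ starting at $p_2$ and directed toward $p_1$, let $x$ be its other endpoint, let $L=D(x,2)\cap D(p_2,2)$, and let $P_L=L\cap P_C$. Let $X\subseteq P_L$ be a clique with $|X|\ge(1-\varepsilon/2)|Y^*|$, where $Y^*$ is a maximum clique in $P_L$. Let $X^*$ be a maximum clique in $P_C$. Then there is an absolute constant $c>0$ such that, with probability at least $c\,\varepsilon$ (over the choice of $p_1,p_2$), $|X|\ge(1-\varepsilon)|X^*|$.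
   Context: $D(p,r)$ denotes the closed disk with center $p$ and radius $r$. Grid cells are closed squares. If $p_1=p_2$, the direction of $s$ is arbitrary. *)

From HB Require Import structures.
From mathcomp Require Import all_boot all_order all_algebra reals.
Set Implicit Arguments. Unset Strict Implicit. Unset Printing Implicit Defensive.
Import Order.TTheory GRing.Theory Num.Theory.
Local Open Scope ring_scope.

Section Defs.
Variable R : realType.
Notation pt := (R * R)%type.

Definition dist (p q : pt) : R :=
  Num.sqrt ((p.1 - q.1) ^+ 2 + (p.2 - q.2) ^+ 2).

Definition in_disk (c : pt) (r : R) (p : pt) : bool := dist c p <= r.

(* A point set is given as an (injective) indexing P : 'I_n -> pt;
   subsets of the point set are {set 'I_n}. *)
Definition clique n (P : 'I_n -> pt) (X : {set 'I_n}) : Prop :=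
  forall i j, i \in X -> j \in X -> dist (P i) (P j) <= 2.

Definition is_max_clique n (P : 'I_n -> pt) (S Y : {set 'I_n}) : Prop :=
  [/\ Y \subset S, clique P Y &
      forall Z : {set 'I_n}, Z \subset S -> clique P Z -> #|Z| <= #|Y| ]%N.

(* Regular axis-parallel square grid with cells of diameter 2, i.e. side
   length sqrt 2, placed with a corner at origin o. *)
Definition cell_side : R := Num.sqrt 2.

Definition in_cell (o : pt) (i j : int) (p : pt) : bool :=
  (o.1 + i%:~R * cell_side <= p.1 <= o.1 + (i + 1)%:~R * cell_side) &&
  (o.2 + j%:~R * cell_side <= p.2 <= o.2 + (j + 1)%:~R * cell_side).

Definition in_block5 (o : pt) (i j : int) (p : pt) : bool :=
  [exists di : 'I_5, exists dj : 'I_5,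
     in_cell o (i + (di : nat)%:Z - 2) (j + (dj : nat)%:Z - 2) p].

Definition PC n (P : 'I_n -> pt) (o : pt) (i j : int) : {set 'I_n} :=
  [set k | in_block5 o i j (P k)].

(* other endpoint x of the segment s of length 2 starting at p2 directed
   toward p1; if p1 = p2 the (arbitrary) unit direction u is used. *)
Definition seg_end (p1 p2 u : pt) : pt :=
  if p1 == p2 then (p2.1 + 2 * u.1, p2.2 + 2 * u.2)
  else (p2.1 + 2 / dist p1 p2 * (p1.1 - p2.1),
        p2.2 + 2 / dist p1 p2 * (p1.2 - p2.2)).

Definition PL n (P : 'I_n -> pt) (PCs : {set 'I_n}) (p1 p2 u : pt) : {set 'I_n} :=
  [set k in PCs | in_disk (seg_end p1 p2 u) 2 (P k) && in_disk p2 2 (P k)].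

End Defs.

From HB Require Import structures.
From mathcomp Require Import all_boot all_order all_algebra reals ring lra.
Import Order.TTheory GRing.Theory Num.Theory.

(* Let m = |X*|.  The 25 cells of C^+ have diameter 2, so each of them meets P_C
   in a clique and |P_C| <= 25 m.  Fix a in X* and call b in X* good when fewer
   than eps m / 2 points of X* are farther from a than b; the farthest points of
   X* from a show that at least eps m / 2 points are good.  For (p1, p2) = (a, b)
   with b good, every q in X* with |a q| <= |a b| lies in L: |b q| <= 2 since X*
   is a clique, and |x q| <= 2 since x is a pushed away from b along the ray
   b a to distance 2 >= |a b|.  So all but eps m / 2 points of X* lie in L,
   whence |Y*| >= (1 - eps/2) m and |X| >= (1 - eps/2)^2 m >= (1 - eps) m.
   There are at least m * eps m / 2 such pairs, and m^2 / 2 >= |P_C|^2 / 1250. *)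

Set Implicit Arguments. Unset Strict Implicit. Unset Printing Implicit Defensive.
Local Open Scope ring_scope.

Section Geometry.
Variable R : realType.
Implicit Types (p q a b u : R * R) (r : R).

Lemma dist_le p q r : 0 <= r ->
  (dist p q <= r) = ((p.1 - q.1) ^+ 2 + (p.2 - q.2) ^+ 2 <= r ^+ 2).
Proof. by move=> r0; rewrite /dist -{1}(ger0_norm r0) -sqrtr_sqr ler_sqrt ?sqr_ge0. Qed.

Lemma dist_le0 p q : (dist p q <= 0) = (p == q).
Proof.
rewrite dist_le // expr0n /= le_eqVlt ltNge addr_ge0 ?sqr_ge0 // orbF.
rewrite paddr_eq0 ?sqr_ge0 // !sqrf_eq0 !subr_eq0.
by case: p q => [? ?] [? ?]; rewrite xpair_eqE.
Qed.

Lemma in_cell_dist_le2 o (x y : int) p q :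
  in_cell o x y p -> in_cell o x y q -> dist p q <= 2.
Proof.
rewrite /in_cell !rmorphD /=.
move=> /andP[/andP[p1 p2] /andP[p3 p4]] /andP[/andP[q1 q2] /andP[q3 q4]].
have s2 : cell_side R ^+ 2 = 2 by rewrite sqr_sqrtr.
rewrite dist_le //; set s := cell_side R in s2 p1 p2 p3 p4 q1 q2 q3 q4 *.
nra.
Qed.

Lemma stretch_sqr_le (t e1 e2 w1 w2 : R) : 1 <= t ->
  t ^+ 2 * (e1 ^+ 2 + e2 ^+ 2) = 2 ^+ 2 ->
  (e1 - w1) ^+ 2 + (e2 - w2) ^+ 2 <= e1 ^+ 2 + e2 ^+ 2 ->
  (t * e1 - w1) ^+ 2 + (t * e2 - w2) ^+ 2 <= 2 ^+ 2.
Proof.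
(* |t e - w|^2 = 4 - 2 (t - 1) w.e - (2 w.e - |w|^2), and |e - w| <= |e| makes
   both subtracted terms nonnegative. *)
move=> t1 te hw.
have hwe : w1 ^+ 2 + w2 ^+ 2 <= 2 * (w1 * e1 + w2 * e2) by lra.
have we0 : 0 <= w1 * e1 + w2 * e2 by have := sqr_ge0 w1; have := sqr_ge0 w2; lra.
have -> : (t * e1 - w1) ^+ 2 + (t * e2 - w2) ^+ 2 =
  2 ^+ 2 - 2 * (t - 1) * (w1 * e1 + w2 * e2)
    - (2 * (w1 * e1 + w2 * e2) - (w1 ^+ 2 + w2 ^+ 2)).
  by rewrite -te; ring.
have : 0 <= (t - 1) * (w1 * e1 + w2 * e2) by rewrite mulr_ge0 // subr_ge0.
lra.
Qed.

Lemma dist_seg_end_le2 a b q u : u.1 ^+ 2 + u.2 ^+ 2 = 1 ->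
  dist a b <= 2 -> dist a q <= dist a b -> dist (seg_end a b u) q <= 2.
Proof.
move=> hu hab haq; rewrite /seg_end; case: eqP => [eab|/eqP nab].
  have /eqP <- : a == q by rewrite -dist_le0 (le_trans haq) // eab dist_le0.
  by rewrite -eab dist_le //= ![_ + 2 * _]addrC !addrK !exprMn -mulrDr hu mulr1.
have d0 : 0 < dist a b by rewrite ltNge dist_le0.
have dd : dist a b ^+ 2 = (a.1 - b.1) ^+ 2 + (a.2 - b.2) ^+ 2.
  by rewrite sqr_sqrtr ?addr_ge0 ?sqr_ge0.
move: haq; rewrite (dist_le _ _ (ltW d0)) dist_le //= dd => haq.
set d := dist a b in hab d0 dd *.
have recenter (x y z : R) : x - z = (x - y) - (z - y) by ring.
have shift (x y z : R) : x + y - z = y - (z - x) by ring.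
rewrite (recenter a.1 b.1 q.1) (recenter a.2 b.2 q.2) in haq.
rewrite (shift b.1) (shift b.2); apply: stretch_sqr_le haq.
- by rewrite ler_pdivlMr // mul1r.
- by rewrite -dd -exprMn mulfVK ?gt_eqF.
Qed.
End Geometry.

Lemma card_bigcup_le (I T : finType) (B : I -> {set T}) :
  (#|\bigcup_i B i| <= \sum_i #|B i|)%N.
Proof.
apply: (big_ind2 (fun (S : {set T}) m => #|S| <= m)%N) => [|S1 m1 S2 m2 h1 h2|//].
  by rewrite cards0.
exact: leq_trans (leq_card_setU S1 S2).1 (leq_add h1 h2).
Qed.

Lemma card_dep_pairs (T : finType) (A : {set T}) (S : T -> {set T}) :
  #|[set pr : T * T | (pr.1 \in A) && (pr.2 \in S pr.1)]| = (\sum_(a in A) #|S a|)%N.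
Proof.
under eq_bigr => a _ do rewrite -sum1_card.
by rewrite pair_big_dep sum1dep_card.
Qed.

Lemma card_few_above_ge (T : finType) (R : realDomainType) (X : {set T})
    (f : T -> R) (k : R) :
  k <= #|X|%:R -> k <= #|[set b in X | #|[set q in X | f b < f q]|%:R < k]|%:R.
Proof.
set S := [set b in X | _] => kX.
have [XS | /subsetPn[b0 b0X b0S]] := boolP (X \subset S).
  by apply: le_trans kX _; rewrite ler_nat subset_leq_card.
have : b0 \in X :\: S by rewrite inE b0S.
case/(arg_maxP f) => bs /setDP[bsX bsS] bs_max.
have aboveS : [set q in X | f bs < f q] \subset S.
  apply/subsetP => q; rewrite inE => /andP[qX lt_bs_q]; apply/negPn/negP => qS.
  have : q \in X :\: S by rewrite inE qS qX.
  by move/bs_max; rewrite /= leNgt lt_bs_q.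
apply: le_trans (_ : #|[set q in X | f bs < f q]|%:R <= _); last first.
  by rewrite ler_nat subset_leq_card.
by move: bsS; rewrite inE bsX /= -leNgt.
Qed.

Section Cliques.
Variables (R : realType) (n : nat) (P : 'I_n -> R * R).

Lemma ex_max_clique (S : {set 'I_n}) : exists Y, is_max_clique P S Y.
Proof.
pose cliqueb (Z : {set 'I_n}) := [forall x in Z, forall y in Z, dist (P x) (P y) <= 2].
have cliquebP Z : reflect (clique P Z) (cliqueb Z).
  apply: (iffP forall_inP) => [h x y /h/forall_inP|h x hx]; first exact.
  by apply/forall_inP => y; apply: h.
pose admissible (Z : {set 'I_n}) := (Z \subset S) && cliqueb Z.
have admissible0 : admissible set0.
  by rewrite /admissible sub0set; apply/cliquebP => x y; rewrite inE.
case: (arg_maxnP (fun Z : {set 'I_n} => #|Z|) admissible0).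
move=> Y /andP[YS /cliquebP Yclique] Ymax.
by exists Y; split=> // Z ZS /cliquebP Zclique; apply: Ymax; rewrite /admissible ZS.
Qed.

Lemma max_clique_approx_ge (L K X : {set 'I_n}) (eps : R) :
  0 <= eps <= 2 -> clique P K ->
  (forall Y, is_max_clique P L Y -> (1 - eps / 2) * #|Y|%:R <= #|X|%:R) ->
  #|K :\: L|%:R <= eps * #|K|%:R / 2 ->
  (1 - eps) * #|K|%:R <= #|X|%:R.
Proof.
move=> /andP[eps0 eps2] Kclique XY KL.
have [Y Ymax] := ex_max_clique L.
have := XY Y Ymax; case: Ymax => _ _ Ymax.
have KLY : (#|K :&: L| <= #|Y|)%N.
  apply: Ymax; first exact: subsetIr.
  by move=> x y /setIP[x_K _] /setIP[y_K _]; apply: Kclique.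
have : #|K|%:R <= #|Y|%:R + #|K :\: L|%:R :> R.
  by rewrite -natrD ler_nat -(cardsID L K) leq_add2r.
set k := (#|K|%:R : R); set y := (#|Y|%:R : R) => KY XYk.
have k0 : 0 <= eps ^+ 2 * k by rewrite mulr_ge0 ?sqr_ge0.
have : (1 - eps / 2) * (k - eps * k / 2) <= (1 - eps / 2) * y.
  by rewrite ler_wpM2l; lra.
lra.
Qed.

Lemma card_PC_le_max_clique o i j Y :
  is_max_clique P (PC P o i j) Y -> (#|PC P o i j| <= 25 * #|Y|)%N.
Proof.
case=> _ _ Ymax.
pose B (c : 'I_5 * 'I_5) := PC P o i j :&:
  [set k | in_cell o (i + (c.1 : nat)%:Z - 2) (j + (c.2 : nat)%:Z - 2) (P k)].
have PC_cover : PC P o i j \subset \bigcup_c B c.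
  apply/subsetP => k k_PC.
  move: (k_PC); rewrite inE => /existsP[di /existsP[dj k_cell]].
  by apply/bigcupP; exists (di, dj); rewrite // in_setI k_PC inE.
apply: leq_trans (subset_leq_card PC_cover) (leq_trans (card_bigcup_le B) _).
have -> : (25 * #|Y| = \sum_(c : 'I_5 * 'I_5) #|Y|)%N.
  by rewrite sum_nat_const card_prod !card_ord.
apply: leq_sum => c _.
apply: Ymax; first exact: subsetIl.
move=> x y /setIP[_]; rewrite inE => x_cell /setIP[_]; rewrite inE.
exact: in_cell_dist_le2.
Qed.

Lemma setD_PL_subset_farther (PCs K : {set 'I_n}) (u : R * R) (a b : 'I_n) :
  u.1 ^+ 2 + u.2 ^+ 2 = 1 -> K \subset PCs -> clique P K -> a \in K -> b \in K ->
  K :\: PL P PCs (P a) (P b) u \subset [set q in K | dist (P a) (P b) < dist (P a) (P q)].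
Proof.
move=> hu KPC Kclique aK bK; apply/subsetP => q /setDP[qK qL].
rewrite inE qK ltNge; apply: contra qL => closer.
by rewrite !inE (subsetP KPC) //= /in_disk dist_seg_end_le2 ?Kclique.
Qed.

End Cliques.

Theorem lemma7 :
  exists c : rat, 0 < c /\
  forall (R' : realType) (n : nat) (P : 'I_n -> R' * R'),
  injective P ->
  forall (o : R' * R') (i j : int),
  (exists k : 'I_n, in_cell o i j (P k)) ->
  forall eps : R', 0 < eps -> eps < 1 ->
  (* arbitrary unit direction used when p1 = p2 *)
  forall u : 'I_n -> R' * R', (forall k, (u k).1 ^+ 2 + (u k).2 ^+ 2 = 1) ->
  (* X p1 p2 : the clique chosen in P_L for the sample (p1, p2) *)
  forall X : 'I_n -> 'I_n -> {set 'I_n},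
  (forall p1 p2, p1 \in PC P o i j -> p2 \in PC P o i j ->
     let L := PL P (PC P o i j) (P p1) (P p2) (u p2) in
     [/\ X p1 p2 \subset L, clique P (X p1 p2) &
        forall Y, is_max_clique P L Y ->
          (1 - eps / 2) * (#|Y|%:R) <= (#|X p1 p2|%:R : R')]) ->
  forall Xstar : {set 'I_n}, is_max_clique P (PC P o i j) Xstar ->
  ratr c * eps * (#|PC P o i j| ^ 2)%:R <=
  (#|[set pr : 'I_n * 'I_n | [&& pr.1 \in PC P o i j, pr.2 \in PC P o i j &
        (1 - eps) * (#|Xstar|%:R) <= (#|X pr.1 pr.2|%:R : R')]]|)%:R.
Proof.
exists (1250%:R)^-1; split; first by rewrite invr_gt0 ltr0n.
move=> R n P _ o i j _ eps eps0 eps1 u hu X hX Xstar Xstar_max.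
have N_le := card_PC_le_max_clique Xstar_max.
case: Xstar_max => XPC Xclique _.
set PCs := PC P o i j in N_le XPC hX *; set m := #|Xstar| in N_le *.
pose S a := [set b in Xstar |
  #|[set q in Xstar | dist (P a) (P b) < dist (P a) (P q)]|%:R < eps * m%:R / 2].
have S_large a : eps * m%:R / 2 <= #|S a|%:R.
  by apply: card_few_above_ge; have : (0 : R) <= m%:R by []; nra.
have S_good a b : a \in Xstar -> b \in S a -> (1 - eps) * m%:R <= #|X a b|%:R.
  move=> aX; rewrite inE => /andP[bX few].
  have [_ _ XY] := hX a b (subsetP XPC a aX) (subsetP XPC b bX).
  apply: (max_clique_approx_ge _ Xclique XY); first by apply/andP; split; lra.
  apply: le_trans (ltW few); rewrite ler_nat subset_leq_card //.
  exact: setD_PL_subset_farther (hu b) XPC Xclique aX bX.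
set G := [set pr | _].
have : (\sum_(a in Xstar) #|S a| <= #|G|)%N.
  rewrite -card_dep_pairs subset_leq_card //; apply/subsetP => -[a b].
  rewrite inE /= => /andP[aX bSa].
  have bX : b \in Xstar by move: bSa; rewrite inE => /andP[].
  by rewrite inE /= !(subsetP XPC) //= S_good.
rewrite -(ler_nat R) natr_sum => sum_le.
have pairs_ge : m%:R * (eps * m%:R / 2) <= #|G|%:R.
  rewrite mulr_natl; apply: le_trans sum_le.
  by apply: le_trans (ler_sum _ (fun a _ => S_large a)); rewrite sumr_const.
rewrite -(ler_nat R) natrM in N_le.
have N2 : #|PCs|%:R ^+ 2 <= (25 * m%:R) ^+ 2 :> R by rewrite !expr2 ler_pM.
have := ler_wpM2l (ltW eps0) N2.
rewrite fmorphV rmorph_nat natrX.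
lra.
Qed.
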